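(* Let $G$ be a finite group acting transitively on a finite set $\mathsf X$, fix $x_0\in\mathsf X$, let $H=\{g\in G: gx_0=x_0\}$, and choose representatives $k_x\in G$ ($x\in\mathsf X$) with $k_xx_0=x$ and $k_{x_0}=e$. Let $\psi:H\times H\to U(1)$ be a 2-cocycle, i.e. $\psi(a,bc)\psi(b,c)=\psi(a,b)\psi(ab,c)$ for all $a,b,c\in H$. Define $L:G\times G\times\mathsf X\to U(1)$ by $$L^x_{g_1,g_2}=\psi(h_1,h_2),\qquad h_1=k_{g_1g_2x}^{-1}\,g_1\,k_{g_2x},\quad h_2=k_{g_2x}^{-1}\,g_2\,k_x\ (\in H).$$ Then $L$ is block independent if and only if $\psi$ extends to $G$, i.e. there exists a 2-cocycle $\Psi:G\times G\to\mathbb{C}^\times$ (equivalently, one with values in $U(1)$) whose restriction to $H\times H$ equals $\psi$.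
   Context: A gauge transformation is a pair of functions $\beta:G\times G\to\mathbb{C}^\times$, $\gamma:G\times\mathsf X\to\mathbb{C}^\times$ ($(g,x)\mapsto\gamma^x_g$); it maps $L$ to $L'^x_{g,h}=\dfrac{\beta_{g,h}\,\gamma^x_{gh}}{\gamma^{hx}_{g}\,\gamma^x_h}L^x_{g,h}$. For a family $L$ define $\ell^x_{a,b;g}=L^x_{ag,g^{-1}b}/L^x_{a,b}$. $L$ is called block independent if there is a gauge transformation such that the transformed quantities $\ell'^x_{a,b;g}$ are independent of $x\in\mathsf X$ for all $a,b,g\in G$. A 2-cocycle $\Psi:G\times G\to\mathbb{C}^\times$ satisfies $\Psi(a,bc)\Psi(b,c)=\Psi(a,b)\Psi(ab,c)$ for all $a,b,c\in G$. *)

(* finite group gT (the whole type plays the role of G),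
   finite set X, complex numbers C := R[i] for R : realType. *)
From HB Require Import structures.
From mathcomp Require Import all_boot all_algebra all_fingroup.
From mathcomp Require Import reals complex.
Set Implicit Arguments. Unset Strict Implicit. Unset Printing Implicit Defensive.
Import GRing.Theory Num.Theory.
Local Open Scope ring_scope.

Section Defs.
Variables (R : realType) (gT : finGroupType) (X : finType).
Local Notation C := (R[i]).

Definition is_left_action (act : gT -> X -> X) : Prop :=
  (forall x, act 1%g x = x) /\
  (forall g h x, act (g * h)%g x = act g (act h x)).

Definition transitive_action (act : gT -> X -> X) : Prop :=
  forall x y, exists g, act g x = y.

Definition stab (act : gT -> X -> X) (x0 : X) : {set gT} :=
  [set g | act g x0 == x0].

Definition gauge (beta : gT -> gT -> C) (gamma : gT -> X -> C)
  (act : gT -> X -> X) (L : X -> gT -> gT -> C) : X -> gT -> gT -> C :=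
  fun x g h => beta g h * gamma (g * h)%g x / (gamma g (act h x) * gamma h x)
               * L x g h.

Definition ell (L : X -> gT -> gT -> C) (x : X) (a b g : gT) : C :=
  L x (a * g)%g (g^-1 * b)%g / L x a b.

Definition block_independent (act : gT -> X -> X) (L : X -> gT -> gT -> C) : Prop :=
  exists (beta : gT -> gT -> C) (gamma : gT -> X -> C),
    (forall g h, beta g h != 0) /\ (forall g x, gamma g x != 0) /\
    (forall a b g x y, ell (gauge beta gamma act L) x a b g =
                       ell (gauge beta gamma act L) y a b g).

Definition L_of (act : gT -> X -> X) (k : X -> gT) (psi : gT -> gT -> C)
  : X -> gT -> gT -> C :=
  fun x g1 g2 =>
    psi ((k (act (g1 * g2)%g x))^-1 * g1 * k (act g2 x))%g
        ((k (act g2 x))^-1 * g2 * k x)%g.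

End Defs.

From HB Require Import structures.
From mathcomp Require Import all_boot all_algebra all_fingroup.
From mathcomp Require Import reals complex.
From mathcomp Require Import ring.
Set Implicit Arguments. Unset Strict Implicit. Unset Printing Implicit Defensive.
Import GRing.Theory Num.Theory.
Local Open Scope ring_scope.

(* [L] is a twisted 2-cocycle, [L^x(g1,g2g3) L^x(g2,g3) = L^{g3x}(g1,g2) L^x(g1g2,g3)],
   and a gauge transformation with trivial [beta] multiplies it by a twisted
   coboundary, so it stays one.  If [Psi] extends [psi], the gauge
   [gamma^x_g = Psi(k_{gx}, k_{gx}^-1 g k_x) / Psi(g, k_x)] turns [L] into [Psi]
   itself, which does not depend on [x].  Conversely, [beta] cancels from [ell]
   up to an [x]-independent factor; taking [g = b] in [ell] shows that the
   transformed family [M] satisfies [M^x(a,b) M^y(1,1) = M^y(a,b) M^x(1,1)], and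
   the twisted cocycle identity then makes [M^{x0}(a,b) M^{b^-1 x0}(1,1)] a
   cocycle on [G]; correcting it by a coboundary gives an extension of [psi]. *)

Section Cocycles.
Variables (F : fieldType) (gT : finGroupType).

Definition cocycle (Psi : gT -> gT -> F) : Prop :=
  forall a b c, Psi a (b * c)%g * Psi b c = Psi a b * Psi (a * b)%g c.

Lemma cocycleM (P Q : gT -> gT -> F) :
  cocycle P -> cocycle Q -> cocycle (fun a b => P a b * Q a b).
Proof.
move=> cP cQ a b c.
by rewrite mulrACA cP cQ mulrACA.
Qed.

Lemma coboundary_cocycle (f : gT -> F) :
  (forall g, f g != 0) -> cocycle (fun a b => f a * f b / f (a * b)%g).
Proof. by move=> fnz a b c; rewrite mulgA; field; rewrite !fnz. Qed.

(* Translating the arguments changes [Psi] by a coboundary; this is where the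
   gauge [extension_gauge] below comes from. *)
Lemma cocycle_translate (Psi : gT -> gT -> F) : cocycle Psi ->
  forall u v w g h : gT,
  Psi (u^-1 * g * v)%g (v^-1 * h * w)%g * Psi u (u^-1 * (g * h) * w)%g
    * Psi g v * Psi h w
  = Psi g h * Psi u (u^-1 * g * v)%g * Psi v (v^-1 * h * w)%g * Psi (g * h)%g w.
Proof.
move=> cPsi u v w g h.
set g' := (u^-1 * g * v)%g; set h' := (v^-1 * h * w)%g.
have e1 := cPsi g h w.
have e2 := cPsi g v h'.
have e3 := cPsi u g' h'.
have -> : (u^-1 * (g * h) * w = g' * h')%g by rewrite !mulgA mulgK.
have vh' : (v * h' = h * w)%g by rewrite !mulgA mulgV mul1g.
have ug' : (u * g' = g * v)%g by rewrite !mulgA mulgV mul1g.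
rewrite vh' ug' in e2 e3.
transitivity (Psi u (g' * h')%g * Psi g' h' * (Psi g v * Psi h w)); first by ring.
rewrite e3.
transitivity (Psi u g' * Psi h w * (Psi g v * Psi (g * v)%g h')); first by ring.
rewrite -e2.
transitivity (Psi u g' * Psi v h' * (Psi g (h * w)%g * Psi h w)); first by ring.
by rewrite e1; ring.
Qed.

End Cocycles.

Section LeftAction.
Variables (gT : finGroupType) (X : finType) (act : gT -> X -> X).
Hypothesis act_left : is_left_action act.

Lemma act1 x : act 1%g x = x.
Proof. by case: act_left. Qed.

Lemma actM g h x : act (g * h)%g x = act g (act h x).
Proof. by case: act_left. Qed.

Lemma actKV g x : act g (act g^-1 x) = x.
Proof. by rewrite -actM mulgV act1. Qed.

Lemma actVK g x : act g^-1 (act g x) = x.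
Proof. by rewrite -actM mulVg act1. Qed.

End LeftAction.

Section TwistedCocycles.
Variables (F : fieldType) (gT : finGroupType) (X : finType) (act : gT -> X -> X).
Hypothesis act_left : is_left_action act.

Definition twisted_cocycle (M : X -> gT -> gT -> F) : Prop :=
  forall x g1 g2 g3, M x g1 (g2 * g3)%g * M x g2 g3
                     = M (act g3 x) g1 g2 * M x (g1 * g2)%g g3.

Definition twisted_coboundary (gamma : gT -> X -> F) (x : X) (g h : gT) : F :=
  gamma (g * h)%g x / (gamma g (act h x) * gamma h x).

Lemma twisted_cocycleM (M N : X -> gT -> gT -> F) :
  twisted_cocycle M -> twisted_cocycle N ->
  twisted_cocycle (fun x g h => M x g h * N x g h).
Proof. by move=> cM cN x g1 g2 g3; rewrite mulrACA cM cN mulrACA. Qed.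

Lemma twisted_coboundary_cocycle (gamma : gT -> X -> F) :
  (forall g x, gamma g x != 0) -> twisted_cocycle (twisted_coboundary gamma).
Proof.
move=> gnz x g1 g2 g3; rewrite /twisted_coboundary !(actM act_left) !mulgA.
by field; rewrite !gnz.
Qed.

Lemma twisted_cocycle_g1 (M : X -> gT -> gT -> F) :
  (forall x g h, M x g h != 0) -> twisted_cocycle M ->
  forall x g, M x g 1%g = M x 1%g 1%g.
Proof.
move=> Mnz cM x g; apply: (mulfI (Mnz x g 1%g)).
by have := cM x g 1%g 1%g; rewrite !mulg1 (act1 act_left) => ->.
Qed.

Lemma twisted_cocycle_untwist (M : X -> gT -> gT -> F) (x0 : X) :
  (forall x g h, M x g h != 0) -> twisted_cocycle M ->
  (forall x y a b, M x a b * M y 1%g 1%g = M y a b * M x 1%g 1%g) ->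
  cocycle (fun a b => M x0 a b * M (act b^-1 x0) 1%g 1%g).
Proof.
move=> Mnz cM sep g1 g2 g3.
set K := fun x => M x 1%g 1%g.
have Knz x : K x != 0 by exact: Mnz.
have sepK x y a b : M x a b * K y = M y a b * K x by exact: sep.
set y := act (g2 * g3)^-1 x0; set z := act g2^-1 x0; set w := act g3^-1 x0.
have gy : act g3 y = z by rewrite /y invMg (actM act_left) (actKV act_left).
(* The twisted identity at [y], moved to the base point [x0] with [sepK]. *)
have := cM y g1 g2 g3; rewrite gy => twist.
rewrite -/(K y) -/(K z) -/(K w).
transitivity (M x0 g1 (g2 * g3)%g * K y * (M x0 g2 g3 * K y) * K w / K y).
  by field.
rewrite (sepK x0 y g1) (sepK x0 y g2).
transitivity (M y g1 (g2 * g3)%g * M y g2 g3 * (K x0 * K x0) * K w / K y).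
  by ring.
rewrite twist.
transitivity (M z g1 g2 * K x0 * (M y (g1 * g2)%g g3 * K x0) * K w / K y).
  by ring.
by rewrite -(sepK x0 z) -(sepK x0 y); field.
Qed.

End TwistedCocycles.

Section Gauge.
Variables (R : realType) (gT : finGroupType) (X : finType) (act : gT -> X -> X).
Local Notation C := R[i].

Lemma gaugeE (beta : gT -> gT -> C) (gamma : gT -> X -> C) L x g h :
  gauge beta gamma act L x g h
  = beta g h * (twisted_coboundary act gamma x g h * L x g h).
Proof. by rewrite /gauge /twisted_coboundary !mulrA. Qed.

Lemma block_independent_untwisted (L : X -> gT -> gT -> C) :
  block_independent act L ->
  exists gamma : gT -> X -> C, (forall g x, gamma g x != 0) /\
    forall x y a b g,
      ell (fun x g h => twisted_coboundary act gamma x g h * L x g h) x a b g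
      = ell (fun x g h => twisted_coboundary act gamma x g h * L x g h) y a b g.
Proof.
case=> beta [gamma [bnz [gnz indep]]]; exists gamma; split=> // x y a b g.
have := indep a b g x y; rewrite /ell !gaugeE -!mulf_div.
by apply: mulfI; rewrite mulf_neq0 ?invr_eq0.
Qed.

Lemma ell_separate (M : X -> gT -> gT -> C) :
  is_left_action act -> (forall x g h, M x g h != 0) -> twisted_cocycle act M ->
  (forall x y a b g, ell M x a b g = ell M y a b g) ->
  forall x y a b, M x a b * M y 1%g 1%g = M y a b * M x 1%g 1%g.
Proof.
move=> act_left Mnz cM indep x y a b.
have := indep x y a b b; rewrite /ell mulVg !(twisted_cocycle_g1 act_left) //.
by move/eqP; rewrite eqr_div // => /eqP; rewrite mulrC => ->; rewrite mulrC.
Qed.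

End Gauge.

Section InducedFamily.
Variables (R : realType) (gT : finGroupType) (X : finType).
Local Notation C := R[i].
Variables (act : gT -> X -> X) (x0 : X) (k : X -> gT) (psi : gT -> gT -> C).
Hypothesis act_left : is_left_action act.
Hypothesis k_rep : forall x, act (k x) x0 = x.
Local Notation H := (stab act x0).
Local Notation L := (L_of act k psi).

Lemma stab_rep g x : ((k (act g x))^-1 * g * k x)%g \in H.
Proof.
by rewrite inE !(actM act_left) k_rep -{2}(k_rep (act g x)) (actVK act_left).
Qed.

Lemma L_of_neq0 :
  (forall a b, a \in H -> b \in H -> psi a b != 0) -> forall x g h, L x g h != 0.
Proof.
by move=> psinz x g h; apply: psinz; rewrite ?(actM act_left) stab_rep.
Qed.

Lemma L_of_twisted_cocycle :
  (forall a b c, a \in H -> b \in H -> c \in H ->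
     psi a (b * c)%g * psi b c = psi a b * psi (a * b)%g c) ->
  twisted_cocycle act L.
Proof.
move=> psi_cocycle x g1 g2 g3; rewrite /L_of !(actM act_left).
set z3 := act g3 x; set z2 := act g2 z3; set z1 := act g1 z2.
have glue (u v w a b : gT) : (u^-1 * a * v * (v^-1 * b * w) = u^-1 * (a * b) * w)%g.
  by rewrite !mulgA mulgK.
rewrite -(glue (k z1) (k z2) (k z3)) -(glue (k z2) (k z3) (k x)).
by apply: psi_cocycle; rewrite ?stab_rep -?(actM act_left) ?stab_rep.
Qed.

Lemma L_of_x0 : k x0 = 1%g -> forall a b, a \in H -> b \in H -> L x0 a b = psi a b.
Proof.
move=> k_x0 a b; rewrite !inE => /eqP ax0 /eqP bx0.
by rewrite /L_of (actM act_left) bx0 ax0 k_x0 invg1 !mul1g !mulg1.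
Qed.

Definition extension_gauge (Psi : gT -> gT -> C) (g : gT) (x : X) : C :=
  Psi (k (act g x)) ((k (act g x))^-1 * g * k x)%g / Psi g (k x).

Lemma L_of_extension_gauge (Psi : gT -> gT -> C) :
  (forall a b, Psi a b != 0) -> cocycle Psi ->
  (forall a b, a \in H -> b \in H -> Psi a b = psi a b) ->
  forall x g h,
    twisted_coboundary act (extension_gauge Psi) x g h * L x g h = Psi g h.
Proof.
move=> Pnz cPsi Pext x g h.
rewrite /twisted_coboundary /extension_gauge /L_of.
rewrite -Pext; try by rewrite ?(actM act_left) stab_rep.
rewrite (actM act_left); set u := k (act g (act h x)); set v := k (act h x); set w := k x.
have E := cocycle_translate cPsi u v w g h.
set P := Psi (u^-1 * g * v)%g _ in E *.
transitivity (P * Psi u (u^-1 * (g * h) * w)%g * Psi g v * Psi h w /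
  (Psi u (u^-1 * g * v)%g * Psi v (v^-1 * h * w)%g * Psi (g * h)%g w)).
  by field; rewrite !Pnz.
by rewrite E; field; rewrite !Pnz.
Qed.

Lemma extension_block_independent (Psi : gT -> gT -> C) :
  (forall a b, Psi a b != 0) -> cocycle Psi ->
  (forall a b, a \in H -> b \in H -> Psi a b = psi a b) ->
  block_independent act L.
Proof.
move=> Pnz cPsi Pext.
exists (fun _ _ => 1), (extension_gauge Psi); split; first by move=> *; exact: oner_neq0.
split; first by move=> g x; rewrite mulf_neq0 ?invr_eq0.
have gauged x g h : gauge (fun _ _ => 1) (extension_gauge Psi) act L x g h = Psi g h.
  by rewrite gaugeE mul1r L_of_extension_gauge.
by move=> a b g x y; rewrite /ell !gauged.
Qed.

Lemma block_independent_extension :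
  (forall a b, a \in H -> b \in H -> psi a b != 0) ->
  (forall a b c, a \in H -> b \in H -> c \in H ->
     psi a (b * c)%g * psi b c = psi a b * psi (a * b)%g c) ->
  k x0 = 1%g -> block_independent act L ->
  exists Psi : gT -> gT -> C,
    (forall a b, Psi a b != 0) /\ cocycle Psi /\
    (forall a b, a \in H -> b \in H -> Psi a b = psi a b).
Proof.
move=> psinz psi_cocycle k_x0 /block_independent_untwisted [gamma [gnz indep]].
pose M x g h := twisted_coboundary act gamma x g h * L x g h.
have Mnz x g h : M x g h != 0.
  by rewrite mulf_neq0 ?L_of_neq0 // mulf_neq0 ?invr_eq0 ?mulf_neq0.
have cM : twisted_cocycle act M := twisted_cocycleM
  (twisted_coboundary_cocycle act_left gnz) (L_of_twisted_cocycle psi_cocycle).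
have sep := ell_separate act_left Mnz cM indep.
(* On [H], [M^{x0}] is [psi] times the twisted coboundary of [gamma]; the
   coboundary of [f] cancels it together with the factor [M^{b^-1 x0}(1,1)]. *)
pose f g := gamma g x0 / M x0 1%g 1%g.
have fnz g : f g != 0 by rewrite mulf_neq0 ?invr_eq0.
exists (fun a b => M x0 a b * M (act b^-1 x0) 1%g 1%g * (f a * f b / f (a * b)%g)).
split.
  move=> a b; apply: mulf_neq0; first exact: mulf_neq0.
  by apply: mulf_neq0; [exact: mulf_neq0 | rewrite invr_eq0].
split; first exact: cocycleM (twisted_cocycle_untwist act_left x0 Mnz cM sep)
  (coboundary_cocycle fnz).
move=> a b Ha Hb; have bx0 : act b x0 = x0 by move: Hb; rewrite inE => /eqP.
have bVx0 : act b^-1 x0 = x0 by rewrite -{1}bx0 (actVK act_left).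
have Mx0 : M x0 a b = gamma (a * b)%g x0 / (gamma a x0 * gamma b x0) * psi a b.
  by rewrite /M /twisted_coboundary L_of_x0 // bx0.
rewrite Mx0 bVx0 /f.
by field; rewrite ?gnz ?Mnz.
Qed.

End InducedFamily.

Theorem mainTheorem8 (R : realType) (gT : finGroupType) (X : finType)
  (act : gT -> X -> X) (x0 : X) (k : X -> gT) (psi : gT -> gT -> R[i]) :
  is_left_action act ->
  transitive_action act ->
  (forall x, act (k x) x0 = x) -> k x0 = 1%g ->
  (forall a b, a \in stab act x0 -> b \in stab act x0 -> `|psi a b| = 1) ->
  (forall a b c, a \in stab act x0 -> b \in stab act x0 -> c \in stab act x0 ->
     psi a (b * c)%g * psi b c = psi a b * psi (a * b)%g c) ->
  block_independent act (L_of act k psi) <->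
  exists Psi : gT -> gT -> R[i],
    (forall a b, Psi a b != 0) /\
    (forall a b c, Psi a (b * c)%g * Psi b c = Psi a b * Psi (a * b)%g c) /\
    (forall a b, a \in stab act x0 -> b \in stab act x0 -> Psi a b = psi a b).
Proof.
move=> act_left _ k_rep k_x0 psi_unit psi_cocycle.
have psinz a b : a \in stab act x0 -> b \in stab act x0 -> psi a b != 0.
  by move=> Ha Hb; rewrite -normr_eq0 psi_unit ?oner_eq0.
split; first exact: block_independent_extension.
by case=> Psi [Pnz [cPsi Pext]]; exact: extension_block_independent cPsi Pext.
Qed.
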